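(* In the two-unicast setting, suppose $k_{1-2}+k_{2-1}\ge\min(k_{12-1},k_{12-2})$ and $k_{2-1}\le k_{2-2}$. Set $R_2^{**}=k_{2-1}$ and $R_1^{**}=\min(k_{12-1},k_{12-2})-k_{2-1}$. Let the field $GF(q)$ and the local coding coefficients at the non-source nodes be fixed so that $\mathrm{rank}(H_{ij})=k_{j-i}$ and $\mathrm{rank}([H_{i1}~H_{i2}])=k_{12-i}$ for $i,j\in\{1,2\}$, and let $M_1$ ($k_{1-12}\times R_1^{**}$) and $M_2$ ($k_{2-12}\times R_2^{**}$) be full column rank source encoding matrices such that $[H_{i1}M_1~~H_{i2}M_2]$ has full column rank $R_1^{**}+R_2^{**}$ for $i=1,2$. Then every pair of nonnegative integers $(R_1,R_2)$ with $$R_1\le\min(k_{12-1},k_{12-2})-k_{2-1},\qquad R_2\le k_{2-2},\qquad R_1+R_2\le\mathrm{rank}([H_{21}M_1~~H_{22}])$$ is achievable.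
   Context: $G=(V,E)$ is a directed acyclic network with unit-capacity edges (each carrying one symbol of $GF(q)$ per use), sources $s_1,s_2$ (no incoming edges), terminals $t_1,t_2$ (no outgoing edges); $t_i$ wants the message of $s_i$. $k_{N_1-N_2}$ is the min-cut from $\{s_i:i\in N_1\}$ to $\{t_j:j\in N_2\}$. W.l.o.g. $s_i$ has exactly $k_{i-12}$ outgoing edges and $t_i$ has exactly $k_{12-i}$ incoming edges. For a linear network code over $GF(q)$ with fixed local coefficients at non-source nodes, $H_{ij}$ is the $k_{12-i}\times k_{j-12}$ matrix such that the vector of symbols on the incoming edges of $t_i$ equals $H_{i1}Y_1+H_{i2}Y_2$, where $Y_j$ is the vector of symbols on the outgoing edges of $s_j$; the source encoding is $Y_j=M_jU_j$ with $U_j$ the message vector of $s_j$. $(R_1,R_2)$ is achievable if for some finite field $GF(q)$ there is a linear network code such that, when $s_i$ observes $R_i$ independent symbols of $GF(q)$, $t_1$ uniquely recovers $s_1$'s message and $t_2$ uniquely recovers $s_2$'s message. *)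

From HB Require Import structures.
From mathcomp Require Import all_boot all_order all_algebra.
Set Implicit Arguments. Unset Strict Implicit. Unset Printing Implicit Defensive.
Import GRing.Theory.
Local Open Scope ring_scope.

Section Network.
(* A network: finite node type V, finite edge type E (multi-edges allowed),
   each edge e goes from node [tail e] to node [head e]; unit capacity. *)
Variables (V E : finType) (tail head : E -> V).

Definition out_edges (v : V) : {set E} := [set e | tail e == v].
Definition in_edges (v : V) : {set E} := [set e | head e == v].

Definition adj_minus (C : {set E}) : rel V :=
  fun u w => [exists e, [&& e \notin C, tail e == u & head e == w]].

Definition acyclic : Prop :=
  forall e : E, ~~ connect (adj_minus set0) (head e) (tail e).

Definition separates (C : {set E}) (S T : {set V}) : bool :=
  [forall s in S, forall t in T, ~~ connect (adj_minus C) s t].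

(* min-cut from S to T (number of edges); #|E| is only the neutral element
   of minn, never reached below #|E| itself since setT is always a cut when
   S and T are disjoint. *)
Definition mincut (S T : {set V}) : nat :=
  \big[minn/#|E|]_(C : {set E} | separates C S T) #|C|.

Variable F : fieldType.
(* local coding coefficients: beta e' e is the coefficient of the symbol on
   edge e' (entering tail e) in the symbol sent on edge e *)
Variable beta : E -> E -> F.
Variables (s1 s2 : V).

Definition src_val (A : {set E}) (y : 'cV[F]_#|A|) (e : E) : F :=
  \sum_(i < #|A|) (if @enum_val E (mem A) i == e then y i 0 else 0).

Definition code_step (y1 : 'cV[F]_#|out_edges s1|) (y2 : 'cV[F]_#|out_edges s2|)
  (f : E -> F) (e : E) : F :=
  if tail e == s1 then src_val y1 e
  else if tail e == s2 then src_val y2 e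
  else \sum_(e' | head e' == tail e) beta e' e * f e'.

(* symbols carried by all edges when the sources emit Y1, Y2 (the recursion
   stabilizes after #|E| rounds in an acyclic network) *)
Definition edge_symbols y1 y2 : E -> F :=
  iter #|E| (code_step y1 y2) (fun _ => 0).

Definition received (t : V) y1 y2 : 'cV[F]_#|in_edges t| :=
  \col_(a < #|in_edges t|) edge_symbols y1 y2 (@enum_val E (mem (in_edges t)) a).

End Network.

Arguments out_edges {V E} tail v.
Arguments in_edges {V E} head v.
Arguments adj_minus {V E} tail head C _ _.
Arguments acyclic {V E} tail head.
Arguments separates {V E} tail head C S T.
Arguments mincut {V E} tail head S T.
Arguments received {V E} tail head {F} beta s1 s2 t y1 y2.

Definition achievable (V E : finType) (tail head : E -> V) (s1 s2 t1 t2 : V)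
  (R1 R2 : nat) : Prop :=
  exists (F : finFieldType) (beta : E -> E -> F)
    (M1 : 'M[F]_(#|out_edges tail s1|, R1)) (M2 : 'M[F]_(#|out_edges tail s2|, R2)),
    (forall (U1 U1' : 'cV[F]_R1) (U2 U2' : 'cV[F]_R2),
        received tail head beta s1 s2 t1 (M1 *m U1) (M2 *m U2)
        = received tail head beta s1 s2 t1 (M1 *m U1') (M2 *m U2') -> U1 = U1') /\
    (forall (U1 U1' : 'cV[F]_R1) (U2 U2' : 'cV[F]_R2),
        received tail head beta s1 s2 t2 (M1 *m U1) (M2 *m U2)
        = received tail head beta s1 s2 t2 (M1 *m U1') (M2 *m U2') -> U2 = U2').

From HB Require Import structures.
From mathcomp Require Import all_boot all_order all_algebra.
From mathcomp Require Import zify.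
Import GRing.Theory.
Local Open Scope ring_scope.

(* Transposing the transfer matrices turns everything into statements about
   row spaces, the native language of mxalgebra.  Source s1 sends
   Y1 = M1 P^T U1 and source s2 sends Y2 = N^T U2, where
   - P (R1 x R1**, row-free) picks an R1-dimensional subspace of the inputs
     of the given precoder M1, and
   - N (R2 x #out(s2)) picks R2 input directions of s2,
   chosen so that at t2 the signal space of s2, spanned by N H22^T, meets
   that of s1, spanned by P (H21 M1)^T, trivially; this is possible as soon as
   R1 + R2 <= rank [H21 M1  H22] (lemma precoders_protecting_second,
   built from row_free_meeting_minimally and row_free_avoiding).
   At t1 nothing has to be chosen: since rank H12 = k21 = #cols M2, all of
   the interference from s2 is aligned with the columns of H12 M2, which are
   independent from those of H11 M1 by hypothesis (aligned_interference). *)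

Section Precoding.
Variable F : fieldType.
Set Implicit Arguments. Unset Strict Implicit.

Lemma row_free_between m1 m2 n (A : 'M[F]_(m1, n)) (B : 'M[F]_(m2, n)) R :
  (A <= B)%MS -> (\rank A <= R <= \rank B)%N ->
  exists P : 'M[F]_(R, n), [/\ row_free P, (A <= P)%MS & (P <= B)%MS].
Proof.
move=> sAB /andP[leAR leRB]; rewrite -(subnKC leAR).
set d := (R - \rank A)%N.
have rD : \rank (B :\: A) = (\rank B - \rank A)%N.
  by have := mxrank_cap_compl B A; rewrite (capmx_idPr sAB); lia.
pose C := (pid_mx d : 'M_(d, \rank (B :\: A)%MS)) *m row_base (B :\: A)%MS.
have rC : \rank C = d by rewrite mxrankMfree ?row_base_free // rank_pid_mx // rD; lia.
have sCD : (C <= B :\: A)%MS by rewrite mulmx_sub ?eq_row_base.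
have disjAC : (row_base A :&: C)%MS = 0.
  apply/eqP; rewrite -submx0 -(capmx_diff B A) capmxC sub_capmx.
  by rewrite (submx_trans (capmxSl _ _)) // (submx_trans (capmxSr _ _)) ?eq_row_base.
exists (col_mx (row_base A) C); split.
- by rewrite /row_free -addsmxE mxrank_disjoint_sum // eq_row_base rC.
- by rewrite -addsmxE -(eq_row_base A) addsmxSl.
- by rewrite -addsmxE addsmx_sub eq_row_base sAB (submx_trans sCD) ?diffmxSl.
Qed.

(* A generic R-dimensional subspace P meets a given subspace L in dimension
   at most R - codim L: take P inside a complement of L, or containing it. *)
Lemma row_free_meeting_minimally p m (L : 'M[F]_(p, m)) R : (R <= m)%N ->
  exists P : 'M[F]_(R, m), row_free P /\ (\rank (P :&: L) <= R - (m - \rank L))%N.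
Proof.
move=> leRm; have rLC := mxrank_compl L.
have [leRC | ltCR] := leqP R (\rank L^C).
  have := @row_free_between _ _ _ (0 : 'M_(1, m)) L^C%MS R (sub0mx _ _).
  rewrite mxrank0 leRC => /(_ isT) [P [freeP _ sPC]].
  exists P; split=> //; suff -> : (P :&: L)%MS = 0 by rewrite mxrank0.
  apply/eqP; rewrite -submx0 -(capmx_compl L) capmxC sub_capmx capmxSl.
  exact: submx_trans (capmxSr _ _) sPC.
have := @row_free_between _ _ _ L^C%MS (1%:M : 'M_m) R (submx1 _).
rewrite mxrank1 (ltnW ltCR) leRm => /(_ isT) [P [freeP sCP _]].
exists P; split=> //.
have fullPL : \rank (P + L)%MS = m.
  apply/eqP; rewrite eqn_leq rank_leq_col /=.
  apply: (@leq_trans (\rank (L + L^C)%MS)); first by rewrite (eqnP (addsmx_compl_full L)).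
  by apply: mxrankS; rewrite addsmx_sub addsmxSr (submx_trans sCP) ?addsmxSl.
have := mxrank_sum_cap P L; have := rank_leq_col L.
rewrite fullPL (eqP freeP); lia.
Qed.

(* Inside the row space of Y one can pick R independent directions avoiding
   D, as long as rank D + R <= rank Y: choose them in Y minus (Y cap D). *)
Lemma row_free_avoiding n k p R (Y : 'M[F]_(n, k)) (D : 'M[F]_(p, k)) :
  (\rank D + R <= \rank Y)%N ->
  exists N : 'M[F]_(R, n), forall v : 'rV_R, (v *m N *m Y <= D)%MS -> v = 0.
Proof.
move=> rDY; have rZ : (R <= \rank (Y :\: D))%N.
  by have := mxrank_cap_compl Y D; have := mxrankS (capmxSr Y D); lia.
set Z := (Y :\: D)%MS in rZ *.
have := @row_free_between _ _ _ (0 : 'M_(1, k)) Z R (sub0mx _ _).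
rewrite mxrank0 rZ => /(_ isT) [T [freeT _ sTZ]].
have sTY : (T <= Y)%MS by apply: submx_trans sTZ (diffmxSl _ _).
exists (T *m pinvmx Y) => v; rewrite -mulmxA (mulmxKpV sTY) => svTD.
have : (v *m T <= Z :&: D)%MS by rewrite sub_capmx svTD (submx_trans (submxMl _ _)).
rewrite capmx_diff submx0 => /eqP vT0.
by apply: (row_free_inj freeT); rewrite vT0 mul0mx.
Qed.

(* The row vectors w whose image w X lies in the row space of Y. *)
Definition preimage m n k (X : 'M[F]_(m, k)) (Y : 'M[F]_(n, k)) : 'M[F]_m :=
  kermx (X *m cokermx Y).

Lemma sub_preimage m n k p (X : 'M[F]_(m, k)) (Y : 'M[F]_(n, k)) (w : 'M[F]_(p, m)) :
  (w <= preimage X Y)%MS = (w *m X <= Y)%MS.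
Proof. by rewrite sub_kermx submxE mulmxA. Qed.

Lemma mxrank_preimage m n k (X : 'M[F]_(m, k)) (Y : 'M[F]_(n, k)) :
  (\rank (preimage X Y) + \rank (X + Y) = m + \rank Y)%N.
Proof.
have eqY : (kermx (cokermx Y) :=: Y)%MS.
  by apply/eqmxP; rewrite sub_kermx mulmx_coker submxE mulmx_ker !eqxx.
have := mxrank_mul_ker X (cokermx Y); rewrite (cap_eqmx (eqmx_refl X) eqY).
have := mxrank_sum_cap X Y; have := rank_leq_row (X *m cokermx Y).
rewrite /preimage mxrank_ker; lia.
Qed.

(* Terminal 2: with L the preimage of Y under X, take P meeting L minimally,
   then N avoiding (P cap L) X; a relation u P X + v N Y = 0 forces -u P into
   P cap L, hence v N Y into (P cap L) X, hence v = 0. *)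
Lemma precoders_protecting_second m n k R1 R2 (X : 'M[F]_(m, k)) (Y : 'M[F]_(n, k)) :
  (R1 <= m)%N -> (R2 <= \rank Y)%N -> (R1 + R2 <= \rank (col_mx X Y))%N ->
  exists (P : 'M[F]_(R1, m)) (N : 'M[F]_(R2, n)), row_free P /\
    forall (u : 'rV_R1) (v : 'rV_R2), u *m P *m X + v *m N *m Y = 0 -> v = 0.
Proof.
move=> leR1 leR2 leR12; set L := preimage X Y.
have [P [freeP rPL]] := row_free_meeting_minimally L leR1.
pose D := ((P :&: L)%MS *m X).
have [N avoidD] : exists N : 'M[F]_(R2, n), forall v : 'rV_R2, (v *m N *m Y <= D)%MS -> v = 0.
  apply: row_free_avoiding.
  have := mxrankM_maxl (P :&: L)%MS X; have := mxrank_preimage X Y.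
  move: leR2 leR12 rPL; rewrite /D -addsmxE -/L; lia.
exists P, N; split=> // u v uv0; apply: avoidD.
have vNY : v *m N *m Y = (- (u *m P)) *m X.
  by rewrite mulNmx; apply/eqP; rewrite -addr_eq0 addrC uv0.
rewrite vNY submxMr // sub_capmx -mulNmx submxMl sub_preimage mulNmx -vNY.
exact: submxMl.
Qed.

(* Terminal 1: if rank Z is at most the number of rows of M, and the rows of
   X and of M Z are independent, then M Z spans Z, so no combination of the
   rows of Z can cancel a nonzero combination of the rows of X. *)
Lemma aligned_interference p k n m2 (X : 'M[F]_(p, k)) (Z : 'M[F]_(n, k))
    (M : 'M[F]_(m2, n)) :
  row_free (col_mx X (M *m Z)) -> (\rank Z <= m2)%N ->
  forall (u : 'rV_p) (w : 'rV_n), u *m X + w *m Z = 0 -> u = 0.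
Proof.
move=> freeXMZ rZ u w uw0.
have sMZ : (M *m Z <= Z)%MS := submxMl M Z.
have rMZ : (m2 <= \rank (M *m Z))%N.
  have := (mxrank_adds_leqif X (M *m Z)).1; have := rank_leq_row X.
  by move/eqP: freeXMZ; rewrite -addsmxE; lia.
have sZMZ : (Z <= M *m Z)%MS.
  by rewrite -(mxrank_leqif_sup sMZ).2 eqn_leq mxrankS //= (leq_trans rZ rMZ).
pose w' := w *m Z *m pinvmx (M *m Z).
have : row_mx u w' *m col_mx X (M *m Z) = 0.
  by rewrite mul_row_col mulmxKpV ?(submx_trans (submxMl _ _) sZMZ).
rewrite -(mul0mx _ (col_mx X (M *m Z))) => /(row_free_inj freeXMZ).
by rewrite -row_mx0 => /eq_row_mx [].
Qed.

Lemma decode_first k a b r s (A : 'M[F]_(k, a)) (B : 'M[F]_(k, b))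
    (E1 : 'M[F]_(a, r)) (E2 : 'M[F]_(b, s)) :
  (forall (u : 'rV_r) (v : 'rV_s), u *m (A *m E1)^T + v *m (B *m E2)^T = 0 -> u = 0) ->
  forall (x x' : 'cV_r) (y y' : 'cV_s),
    A *m (E1 *m x) + B *m (E2 *m y) = A *m (E1 *m x') + B *m (E2 *m y') -> x = x'.
Proof.
move=> indep x x' y y' e.
have diff0 : A *m E1 *m (x - x') + B *m E2 *m (y - y') = 0.
  by rewrite !mulmxBr addrACA -opprD -!mulmxA e subrr.
move/(congr1 trmx): diff0; rewrite linearD /= (trmx_mul (A *m E1)) (trmx_mul (B *m E2)) trmx0.
move=> /indep /eqP.
by rewrite trmx_eq0 subr_eq0 => /eqP.
Qed.

Lemma decode_second k a b r s (A : 'M[F]_(k, a)) (B : 'M[F]_(k, b))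
    (E1 : 'M[F]_(a, r)) (E2 : 'M[F]_(b, s)) :
  (forall (u : 'rV_r) (v : 'rV_s), u *m (A *m E1)^T + v *m (B *m E2)^T = 0 -> v = 0) ->
  forall (x x' : 'cV_r) (y y' : 'cV_s),
    A *m (E1 *m x) + B *m (E2 *m y) = A *m (E1 *m x') + B *m (E2 *m y') -> y = y'.
Proof.
move=> indep x x' y y'; rewrite ![A *m _ + _]addrC.
by apply: decode_first => v u; rewrite addrC; apply: indep.
Qed.
End Precoding.

Theorem corollary1 (V E : finType) (tail head : E -> V) (s1 s2 t1 t2 : V)
  (* the two-unicast network *)
  (hacyc : acyclic tail head)
  (hdist : uniq [:: s1; s2; t1; t2])
  (hs1 : in_edges head s1 = set0) (hs2 : in_edges head s2 = set0)
  (ht1 : out_edges tail t1 = set0) (ht2 : out_edges tail t2 = set0)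
  (hout1 : #|out_edges tail s1| = mincut tail head [set s1] [set t1; t2])
  (hout2 : #|out_edges tail s2| = mincut tail head [set s2] [set t1; t2])
  (hin1 : #|in_edges head t1| = mincut tail head [set s1; s2] [set t1])
  (hin2 : #|in_edges head t2| = mincut tail head [set s1; s2] [set t2])
  (* conditions on the min-cuts *)
  (hk1 : (minn (mincut tail head [set s1; s2] [set t1])
               (mincut tail head [set s1; s2] [set t2])
          <= mincut tail head [set s1] [set t2] + mincut tail head [set s2] [set t1])%N)
  (hk2 : (mincut tail head [set s2] [set t1] <= mincut tail head [set s2] [set t2])%N)
  (* fixed field and local coefficients *)
  (F : finFieldType) (beta : E -> E -> F)
  (H11 : 'M[F]_(#|in_edges head t1|, #|out_edges tail s1|))
  (H12 : 'M[F]_(#|in_edges head t1|, #|out_edges tail s2|))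
  (H21 : 'M[F]_(#|in_edges head t2|, #|out_edges tail s1|))
  (H22 : 'M[F]_(#|in_edges head t2|, #|out_edges tail s2|))
  (hH1 : forall Y1 Y2, received tail head beta s1 s2 t1 Y1 Y2 = H11 *m Y1 + H12 *m Y2)
  (hH2 : forall Y1 Y2, received tail head beta s1 s2 t2 Y1 Y2 = H21 *m Y1 + H22 *m Y2)
  (hr11 : \rank H11 = mincut tail head [set s1] [set t1])
  (hr12 : \rank H12 = mincut tail head [set s2] [set t1])
  (hr21 : \rank H21 = mincut tail head [set s1] [set t2])
  (hr22 : \rank H22 = mincut tail head [set s2] [set t2])
  (hr1 : \rank (row_mx H11 H12) = mincut tail head [set s1; s2] [set t1])
  (hr2 : \rank (row_mx H21 H22) = mincut tail head [set s1; s2] [set t2])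
  (* source encoding matrices for the rates R1ss, R2ss *)
  (M1 : 'M[F]_(#|out_edges tail s1|,
               minn (mincut tail head [set s1; s2] [set t1])
                    (mincut tail head [set s1; s2] [set t2])
               - mincut tail head [set s2] [set t1]))
  (M2 : 'M[F]_(#|out_edges tail s2|, mincut tail head [set s2] [set t1]))
  (hM1 : \rank M1 = (minn (mincut tail head [set s1; s2] [set t1])
                          (mincut tail head [set s1; s2] [set t2])
                     - mincut tail head [set s2] [set t1])%N)
  (hM2 : \rank M2 = mincut tail head [set s2] [set t1])
  (hM12_1 : \rank (row_mx (H11 *m M1) (H12 *m M2))
            = (minn (mincut tail head [set s1; s2] [set t1])
                    (mincut tail head [set s1; s2] [set t2])
               - mincut tail head [set s2] [set t1]
               + mincut tail head [set s2] [set t1])%N)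
  (hM12_2 : \rank (row_mx (H21 *m M1) (H22 *m M2))
            = (minn (mincut tail head [set s1; s2] [set t1])
                    (mincut tail head [set s1; s2] [set t2])
               - mincut tail head [set s2] [set t1]
               + mincut tail head [set s2] [set t1])%N) :
  forall R1 R2 : nat,
    (R1 <= minn (mincut tail head [set s1; s2] [set t1])
                (mincut tail head [set s1; s2] [set t2])
           - mincut tail head [set s2] [set t1])%N ->
    (R2 <= mincut tail head [set s2] [set t2])%N ->
    (R1 + R2 <= \rank (row_mx (H21 *m M1) H22))%N ->
    achievable tail head s1 s2 t1 t2 R1 R2.
Proof.
move=> R1 R2 hR1 hR2 hR3.
have [P [N [freeP protect2]]] :
    exists (P : 'M_(R1, _)) (N : 'M_(R2, _)), row_free P /\
      forall (u : 'rV_R1) (v : 'rV_R2), u *m P *m (M1^T *m H21^T) + v *m N *m H22^T = 0 -> v = 0.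
  apply: precoders_protecting_second => //; first by rewrite mxrank_tr hr22.
  by rewrite -trmx_mul -tr_row_mx mxrank_tr.
have freeT1 : row_free (col_mx (M1^T *m H11^T) (M2^T *m H12^T)).
  by rewrite /row_free -!trmx_mul -tr_row_mx mxrank_tr hM12_1.
have rH12 : (\rank H12^T <= mincut tail head [set s2] [set t1])%N.
  by rewrite mxrank_tr hr12.
exists F, beta, (M1 *m P^T), N^T; split=> U1 U1' U2 U2'.
- rewrite !hH1; apply: decode_first => u v.
  rewrite !trmx_mul !trmxK !mulmxA -(mulmxA (u *m P)).
  move=> /(aligned_interference freeT1 rH12) /eqP.
  by rewrite mulmx_free_eq0 // => /eqP.
- rewrite !hH2; apply: decode_second => u v.
  rewrite !trmx_mul !trmxK !mulmxA -(mulmxA (u *m P)).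
  exact: protect2.
Qed.
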